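(* Let $\mathcal{G}\rightrightarrows M$ be a locally subductive diffeological groupoid. Then its abelianization $\mathcal{G}^{ab}=\mathcal{G}/(\mathcal{G},\mathcal{G})$ (with the quotient diffeology) is a locally subductive diffeological groupoid.
   Context: A diffeological groupoid is a groupoid object in diffeological spaces; $(\mathcal{G},\mathcal{G})=\bigcup_x(\mathcal{G}_x,\mathcal{G}_x)$ is the union of the commutator subgroups of the isotropy groups, and $\mathcal{G}/(\mathcal{G},\mathcal{G})$ carries the quotient diffeology (maps locally constant or locally of the form $q\circ Q$ with $Q$ a plot of $\mathcal{G}$). A smooth map $f:X\to X'$ is locally subductive at $x$ if for every plot $P$ of $X'$ with $P(0)=f(x)$ there are an open neighborhood $V$ of $0$ and a plot $Q:V\to X$ with $Q(0)=x$ and $f\circ Q=P|_V$; it is a local subduction if locally subductive at all points. A diffeological groupoid is locally subductive if its source and target maps are local subductions. *)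

From HB Require Import structures.
From mathcomp Require Import all_boot all_order all_algebra.
From mathcomp Require Import all_classical all_reals all_analysis.
From mathcomp Require Import Rstruct Rstruct_topology.

Set Implicit Arguments.
Unset Strict Implicit.
Unset Printing Implicit Defensive.

Import Order.TTheory GRing.Theory Num.Theory.
Import numFieldNormedType.Exports.
Local Open Scope classical_set_scope.
Local Open Scope ring_scope.

Notation Rn n := 'rV[Rdefinitions.R]_n.

Definition Dom (n : nat) (U : set (Rn n)) := {x : Rn n | U x}.

Definition incl (n : nat) (V U : set (Rn n)) (H : V `<=` U) (y : Dom V) : Dom U :=
  exist _ (sval y) (H (sval y) (svalP y)).

Fixpoint Ck (n m : nat) (U : set (Rn n)) (k : nat) (f : Rn n -> Rn m) : Prop :=
  match k with
  | 0 => forall x, U x -> {for x, continuous f}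
  | k'.+1 => (forall x, U x -> differentiable f x) /\
             forall v : Rn n, Ck U k' ('D_v f)
  end.

Definition smooth_map (m n : nat) (V : set (Rn m)) (U : set (Rn n))
  (F : Dom V -> Dom U) : Prop :=
  exists f : Rn m -> Rn n,
    (forall y : Dom V, f (sval y) = sval (F y)) /\ forall k, Ck V k f.

Definition plot_family (X : Type) :=
  forall (n : nat) (U : set (Rn n)), (Dom U -> X) -> Prop.

Definition is_diffeology (X : Type) (plot : plot_family X) : Prop :=
  [/\
      (forall (n : nat) (U : set (Rn n)) (P : Dom U -> X), plot n U P -> open U),
      (forall n (U : set (Rn n)) (x : X), open U -> plot n U (fun _ => x)),
      (forall n (U : set (Rn n)) (P : Dom U -> X), open U ->
         (forall r : Dom U, exists V (HVU : V `<=` U),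
             [/\ open V, V (sval r) & plot n V (P \o incl HVU)]) ->
         plot n U P) &
      (forall n m (U : set (Rn n)) (V : set (Rn m)) (P : Dom U -> X)
              (F : Dom V -> Dom U),
         open V -> smooth_map F -> plot n U P -> plot m V (P \o F))].

Record diffeological_space := DiffSpace {
  dcarrier :> Type;
  dplot : plot_family dcarrier;
  dplotP : is_diffeology dplot }.
Arguments dplot {d n U} _.

Definition smooth (X Y : diffeological_space) (f : X -> Y) : Prop :=
  forall (n : nat) (U : set (Rn n)) (P : Dom U -> X), dplot P -> dplot (f \o P).

Definition locally_subductive_at (X Y : diffeological_space) (f : X -> Y) (x : X)
  : Prop :=
  forall n (U : set (Rn n)) (P : Dom U -> Y) (H0 : U 0),
    dplot P -> P (exist _ 0 H0) = f x ->
    exists V (HVU : V `<=` U) (HV0 : V 0),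
      open V /\
      exists Q : Dom V -> X,
        [/\ dplot Q, Q (exist _ 0 HV0) = x & forall r, f (Q r) = P (incl HVU r)].

Definition local_subduction (X Y : diffeological_space) (f : X -> Y) : Prop :=
  smooth f /\ forall x, locally_subductive_at f x.

(* Groupoid structure: arrows G, objects M, source s, target t, unit u,
   inverse i, composition m (m g h = "g after h", meaningful when s g = t h;
   outside of composable pairs m is an arbitrary total extension). *)
Definition is_groupoid (G M : Type) (s t : G -> M) (u : M -> G) (i : G -> G)
  (m : G -> G -> G) : Prop :=
  [/\ (forall g h, s g = t h -> s (m g h) = s h /\ t (m g h) = t g),
      (forall f g h, s f = t g -> s g = t h -> m (m f g) h = m f (m g h)),
      (forall x, s (u x) = x /\ t (u x) = x),
      (forall g, m (u (t g)) g = g /\ m g (u (s g)) = g) &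
      (forall g, [/\ s (i g) = t g, t (i g) = s g,
                    m g (i g) = u (t g) & m (i g) g = u (s g)])].

(* Smoothness
   of m is smoothness on G^(2) = G x_M G with the subspace diffeology of the
   product diffeology: a plot of G^(2) is a pair of plots (P,Q) of G with
   s o P = t o Q. *)
Definition diffeological_groupoid (G M : diffeological_space) (s t : G -> M)
  (u : M -> G) (i : G -> G) (m : G -> G -> G) : Prop :=
  [/\ is_groupoid s t u i m, smooth s /\ smooth t, smooth u, smooth i &
      forall (n : nat) (U : set (Rn n)) (P Q : Dom U -> G), dplot P -> dplot Q ->
        (forall r, s (P r) = t (Q r)) -> dplot (fun r => m (P r) (Q r))].

Definition locally_subductive_groupoid (G M : diffeological_space) (s t : G -> M)
  (u : M -> G) (i : G -> G) (m : G -> G -> G) : Prop :=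
  [/\ diffeological_groupoid s t u i m, local_subduction s & local_subduction t].

Inductive comm_sub (G M : Type) (s t : G -> M) (u : M -> G) (i : G -> G)
  (m : G -> G -> G) (x : M) : G -> Prop :=
  | comm_unit : comm_sub s t u i m x (u x)
  | comm_comm : forall g h, s g = x -> t g = x -> s h = x -> t h = x ->
      comm_sub s t u i m x (m (m g h) (m (i g) (i h)))
  | comm_mul : forall a b, comm_sub s t u i m x a -> comm_sub s t u i m x b ->
      comm_sub s t u i m x (m a b)
  | comm_inv : forall a, comm_sub s t u i m x a -> comm_sub s t u i m x (i a).

Definition commutator_subgroupoid (G M : Type) (s t : G -> M) (u : M -> G)
  (i : G -> G) (m : G -> G -> G) : set G :=
  fun c => exists x, comm_sub s t u i m x c.

(* The equivalence relation whose classes are the elements of G/(G,G):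
   g ~ h iff g = c h for some c in (G,G) (i.e. s g = s h and g h^-1 in (G,G)). *)
Definition ab_rel (G M : Type) (s t : G -> M) (u : M -> G) (i : G -> G)
  (m : G -> G -> G) (g h : G) : Prop :=
  s g = s h /\ commutator_subgroupoid s t u i m (m g (i h)).

Definition quotient_plot (G : diffeological_space) (Q : Type) (q : G -> Q)
  : plot_family Q :=
  fun n U P => open U /\
    forall r : Dom U, exists V (HVU : V `<=` U),
      [/\ open V, V (sval r) &
          (exists c : Q, forall y, P (incl HVU y) = c) \/
          (exists PG : Dom V -> G, dplot PG /\ forall y, P (incl HVU y) = q (PG y))].

From Pilot Require Import Defs.
From HB Require Import structures.
From mathcomp Require Import all_boot all_order all_algebra.
From mathcomp Require Import all_classical all_reals all_analysis.
From mathcomp Require Import Rstruct Rstruct_topology.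

(* The commutator subgroupoid is normal: conjugating by an arrow [a] maps the
   commutators of the isotropy group at [t a] to commutators of the isotropy
   group at [s a].  Hence [ab_rel] is a congruence for source, target,
   inversion and composition, and the structure maps descend to the quotient.
   Since the quotient map is surjective, every plot of the quotient diffeology
   lifts locally to a plot of [G]; smoothness of the induced structure maps and
   local subductivity of the induced source and target are then inherited from
   [G], lifts into the quotient being obtained by composing with the quotient
   map. *)

Set Implicit Arguments.
Unset Strict Implicit.

Import numFieldNormedType.Exports.
Local Open Scope classical_set_scope.

Lemma Ck_cst n m (U : set (Rn n)) k (c : Rn m) : Ck U k (fun _ => c).
Proof.
elim: k c => [|k IH] c /=; first by move=> x _; apply: cst_continuous.
split => [x _|v]; first exact: differentiable_cst.
have -> : 'D_v (fun _ : Rn n => c) = fun _ => 0%R by apply: funext => x; rewrite derive_cst.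
exact: IH.
Qed.

Lemma Ck_id n (U : set (Rn n)) k : Ck U k id.
Proof.
case: k => [|k] /=; first by move=> x _.
split => [x _|v]; first exact: ex_diff.
have -> : 'D_v (@id (Rn n)) = fun _ => v by apply: funext => x; rewrite derive_id.
exact: Ck_cst.
Qed.

Lemma Ck_subset n m (U V : set (Rn n)) k (f : Rn n -> Rn m) :
  V `<=` U -> Ck U k f -> Ck V k f.
Proof.
move=> VU; elim: k f => [|k IH] f /=; first by move=> Hf x /VU; apply: Hf.
by case=> Hd HD; split => [x /VU|v]; [apply: Hd | apply: IH].
Qed.

Lemma open_setI_preimage n m (V : set (Rn n)) (W : set (Rn m)) (f : Rn n -> Rn m) :
  open V -> open W -> (forall x, V x -> {for x, continuous f}) ->
  open (V `&` f @^-1` W).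
Proof.
move=> oV oW cf; rewrite openE => y [Vy Wy]; apply: filterI.
  exact: open_nbhs_nbhs.
by apply: (cf y Vy); apply: open_nbhs_nbhs.
Qed.

Lemma Dom_val_inj n (U : set (Rn n)) (a b : Dom U) : sval a = sval b -> a = b.
Proof. by case: a b => a Ha [b Hb] /= E; subst b; congr exist; exact: Prop_irrelevance. Qed.

Lemma plot_restrict (X : diffeological_space) n (U V : set (Rn n)) (VU : V `<=` U)
  (P : Dom U -> X) : open V -> dplot P -> dplot (P \o Defs.incl VU).
Proof.
case: (dplotP X) => _ _ _ Hsmooth oV; apply: Hsmooth => //.
by exists id; split => // k; apply: Ck_id.
Qed.

Section QuotientDiffeology.
Variables (G : diffeological_space) (Q : Type) (q : G -> Q).

Lemma quotient_plot_comp n (U : set (Rn n)) (P : Dom U -> G) :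
  dplot P -> quotient_plot q (q \o P).
Proof.
case: (dplotP G) => Hopen _ _ _ HP; split => [|r]; first exact: Hopen HP.
exists U, (fun x (h : U x) => h); split; [exact: Hopen HP | exact: svalP |].
by right; exists P; split => // y; congr (q (P _)); apply: Dom_val_inj.
Qed.

Lemma quotient_diffeology : is_diffeology (quotient_plot q).
Proof.
case: (dplotP G) => _ _ _ Hsmooth; split.
- by move=> n U P [].
- move=> n U x oU; split => // r; exists U, (fun x (h : U x) => h).
  by split => //; [exact: svalP | left; exists x].
- move=> n U P oU HP; split => // r.
  have [V [VU [oV Vr [_ HPV]]]] := HP r.
  have [W [WV [oW Wr HPW]]] := HPV (exist _ (sval r) Vr).
  exists W, (fun x h => VU x (WV x h)); split => //.
  have Eincl y : Defs.incl (fun x h => VU x (WV x h)) y = Defs.incl VU (Defs.incl WV y).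
    exact: Dom_val_inj.
  case: HPW => [[c Hc]|[PG [HPG E]]].
    by left; exists c => y; rewrite Eincl; apply: Hc.
  by right; exists PG; split => // y; rewrite Eincl; apply: E.
- move=> n k U V P F oV [f [Hf Ckf]] [oU HP]; split => // r.
  have [W [WU [oW Wr HPW]]] := HP (F r).
  pose V' := V `&` f @^-1` W.
  have oV' : open V' by apply: open_setI_preimage => //; apply: (Ckf 0%N).
  have V'V : V' `<=` V by move=> x [].
  have V'W (y : Dom V') : W (sval (F (Defs.incl V'V y))).
    by rewrite -Hf; exact: (proj2 (svalP y)).
  pose F' y := exist W _ (V'W y).
  have EF y : F (Defs.incl V'V y) = Defs.incl WU (F' y) by apply: Dom_val_inj.
  exists V', V'V; split => //; first by split; [exact: svalP | rewrite /preimage /= Hf].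
  case: HPW => [[c Hc]|[PG [HPG E]]].
    by left; exists c => y /=; rewrite EF Hc.
  right; exists (PG \o F'); split; last by move=> y /=; rewrite EF E.
  apply: Hsmooth HPG => //; exists f; split => [y|k']; first by rewrite /= -Hf.
  by apply: Ck_subset (Ckf k') => x [].
Qed.

Hypothesis q_surj : forall y : Q, exists g, q g = y.

Lemma quotient_plot_lift n (U : set (Rn n)) (P : Dom U -> Q) :
  quotient_plot q P -> forall r : Dom U, exists V (VU : V `<=` U),
  [/\ open V, V (sval r) &
      exists PG : Dom V -> G, dplot PG /\ forall y, P (Defs.incl VU y) = q (PG y)].
Proof.
case: (dplotP G) => _ Hcst _ _ [oU HP] r.
have [V [VU [oV Vr [[c Hc]|HPG]]]] := HP r; exists V, VU; split => //.
have [g Hg] := q_surj c; exists (fun _ => g); split; first exact: Hcst.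
by move=> y; rewrite Hc.
Qed.

Lemma quotient_plot_lift2 n (U : set (Rn n)) (P P' : Dom U -> Q) :
  quotient_plot q P -> quotient_plot q P' -> forall r : Dom U,
  exists V (VU : V `<=` U), [/\ open V, V (sval r) &
      exists PG PG' : Dom V -> G, [/\ dplot PG, dplot PG',
        forall y, P (Defs.incl VU y) = q (PG y) & forall y, P' (Defs.incl VU y) = q (PG' y)]].
Proof.
move=> HP HP' r.
have [V [VU [oV Vr [PG [HPG E]]]]] := quotient_plot_lift HP r.
have [V' [V'U [oV' V'r [PG' [HPG' E']]]]] := quotient_plot_lift HP' r.
have WV : V `&` V' `<=` V by move=> x [].
have WV' : V `&` V' `<=` V' by move=> x [].
have oW : open (V `&` V') by apply: openI.
exists (V `&` V'), (fun x h => VU x (WV x h)); split => //.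
exists (PG \o Defs.incl WV), (PG' \o Defs.incl WV'); split; try exact: plot_restrict.
  by move=> y; rewrite /= -E; congr P; apply: Dom_val_inj.
by move=> y; rewrite /= -E'; congr P'; apply: Dom_val_inj.
Qed.

Let GQ := DiffSpace quotient_diffeology.

Lemma smooth_quotient_map : smooth (q : G -> GQ).
Proof. by move=> n U P; apply: quotient_plot_comp. Qed.

Lemma smooth_quotient_lift (Y : diffeological_space) (f : G -> Y) (fQ : GQ -> Y) :
  smooth f -> (forall g, fQ (q g) = f g) -> smooth fQ.
Proof.
move=> sf Hq n U P HP; case: (dplotP Y) => _ _ Hlocal _.
apply: Hlocal; first by case: HP.
move=> r; have [V [VU [oV Vr [PG [HPG E]]]]] := quotient_plot_lift HP r.
exists V, VU; split => //.
have -> : (fQ \o P) \o Defs.incl VU = f \o PG by apply: funext => y /=; rewrite E Hq.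
exact: sf.
Qed.

Lemma locally_subductive_quotient_lift (Y : diffeological_space) (f : G -> Y)
  (fQ : GQ -> Y) : (forall g, locally_subductive_at f g) ->
  (forall g, fQ (q g) = f g) -> forall y, locally_subductive_at fQ y.
Proof.
move=> Hf Hq y n U P U0 HP; have [g <-] := q_surj y; rewrite Hq => P0.
have [V [VU [V0 [oV [PG [HPG PG0 HPGr]]]]]] := Hf g n U P U0 HP P0.
exists V, VU, V0; split => //; exists (q \o PG); split.
- exact: quotient_plot_comp.
- by rewrite /= PG0.
- by move=> r /=; rewrite Hq.
Qed.

End QuotientDiffeology.

Section GroupoidAlgebra.
Variables (G M : Type) (s t : G -> M) (u : M -> G) (i : G -> G) (m : G -> G -> G).
Hypothesis HG : is_groupoid s t u i m.

Lemma s_comp {g h} : s g = t h -> s (m g h) = s h.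
Proof. by case: HG => Hst _ _ _ _ E; case: (Hst _ _ E). Qed.

Lemma t_comp {g h} : s g = t h -> t (m g h) = t g.
Proof. by case: HG => Hst _ _ _ _ E; case: (Hst _ _ E). Qed.

Lemma s_unit x : s (u x) = x.
Proof. by case: HG => _ _ Hu _ _; case: (Hu x). Qed.

Lemma t_unit x : t (u x) = x.
Proof. by case: HG => _ _ Hu _ _; case: (Hu x). Qed.

Lemma s_inv g : s (i g) = t g.
Proof. by case: HG => _ _ _ _ Hi; case: (Hi g). Qed.

Lemma t_inv g : t (i g) = s g.
Proof. by case: HG => _ _ _ _ Hi; case: (Hi g). Qed.

Lemma comp_assoc {f g h} : s f = t g -> s g = t h -> m (m f g) h = m f (m g h).
Proof. by case: HG => _ HA _ _ _; apply: HA. Qed.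

Lemma comp_unitl g : m (u (t g)) g = g.
Proof. by case: HG => _ _ _ Hu _; case: (Hu g). Qed.

Lemma comp_unitr g : m g (u (s g)) = g.
Proof. by case: HG => _ _ _ Hu _; case: (Hu g). Qed.

Lemma comp_invr g : m g (i g) = u (t g).
Proof. by case: HG => _ _ _ _ Hi; case: (Hi g). Qed.

Lemma comp_invl g : m (i g) g = u (s g).
Proof. by case: HG => _ _ _ _ Hi; case: (Hi g). Qed.

Ltac composable := repeat (rewrite ?s_inv ?t_inv ?s_unit ?t_unit;
  first [ rewrite s_comp; [|composable] | rewrite t_comp; [|composable] | idtac ]);
  congruence.

Lemma comp_cancell a b c : s a = t b -> s a = t c -> m a b = m a c -> b = c.
Proof.
move=> Hb Hc E.
rewrite -(comp_unitl b) -(comp_unitl c) -Hb -Hc -comp_invl.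
by rewrite (comp_assoc (s_inv a) Hb) (comp_assoc (s_inv a) Hc) E.
Qed.

Lemma inv_inv g : i (i g) = g.
Proof.
apply: (@comp_cancell (i g)); rewrite ?t_inv ?s_inv //.
by rewrite comp_invr comp_invl t_inv.
Qed.

Lemma inv_comp {g h} : s g = t h -> i (m g h) = m (i h) (i g).
Proof.
move=> Egh; apply: (@comp_cancell (m g h)); rewrite ?t_inv; try composable.
have E1 : s h = t (m (i h) (i g)) by composable.
have E2 : s h = t (i h) by rewrite t_inv.
have E3 : s (i h) = t (i g) by rewrite s_inv t_inv.
have E4 : t h = t (i g) by composable.
rewrite comp_invr (t_comp Egh) (comp_assoc Egh E1) -(comp_assoc E2 E3) comp_invr.
by rewrite E4 comp_unitl comp_invr.
Qed.

Definition gconj a c := m (m (i a) c) a.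

Lemma gconj_unit a : gconj a (u (t a)) = u (s a).
Proof. by rewrite /gconj -s_inv comp_unitr comp_invl. Qed.

Lemma gconj_comp a c d : s c = t a -> t c = t a -> s d = t a -> t d = t a ->
  gconj a (m c d) = m (gconj a c) (gconj a d).
Proof.
move=> sc tc sd td; rewrite /gconj.
have E1 : s (m (i a) c) = t a by composable.
have E2 : s a = t (m (m (i a) d) a) by composable.
have E3 : s a = t (m (i a) d) by composable.
have E4 : s (m (i a) d) = t a by composable.
have E5 : s a = t (i a) by rewrite t_inv.
have E6 : s (i a) = t d by composable.
rewrite (comp_assoc E1 E2) -(comp_assoc E3 E4) -(comp_assoc E5 E6) comp_invr.
rewrite -td comp_unitl.
have E7 : s (m (i a) c) = t d by composable.
have E8 : s (i a) = t c by composable.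
by rewrite -(comp_assoc E7 sd) (comp_assoc E8 (etrans sc (esym td))).
Qed.

Lemma gconj_inv a c : s c = t a -> t c = t a -> gconj a (i c) = i (gconj a c).
Proof.
move=> sc tc; rewrite /gconj.
have E1 : s (m (i a) c) = t a by composable.
have E2 : s (i a) = t c by composable.
have E3 : s (i a) = t (i c) by composable.
have E4 : s (i c) = t a by composable.
by rewrite (inv_comp E1) (inv_comp E2) inv_inv (comp_assoc E3 E4).
Qed.

Lemma comm_sub_st {x c} : comm_sub s t u i m x c -> s c = x /\ t c = x.
Proof.
elim=> [|g h *|a b _ [? ?] _ [? ?]|a _ [? ?]]; rewrite ?s_unit ?t_unit //.
- by split; composable.
- by split; composable.
- by rewrite s_inv t_inv.
Qed.

Lemma comm_sub_gconj {c a} :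
  comm_sub s t u i m (t a) c -> comm_sub s t u i m (s a) (gconj a c).
Proof.
move Ex : (t a) => x Hc.
elim: Hc a Ex => [|g h sg tg sh th|c1 c2 H1 IH1 H2 IH2|c1 H1 IH1] a ta.
- by rewrite -ta gconj_unit; apply: comm_unit.
- rewrite -ta in sg tg sh th.
  rewrite !gconj_comp ?gconj_inv //; try composable.
  by apply: comm_comm; rewrite /gconj; composable.
- have [? ?] := comm_sub_st H1; have [? ?] := comm_sub_st H2; subst x.
  by rewrite gconj_comp //; apply: comm_mul; [apply: IH1 | apply: IH2].
- have [? ?] := comm_sub_st H1; subst x.
  by rewrite gconj_inv //; apply: comm_inv; apply: IH1.
Qed.

Lemma ab_rel_t {g h} : ab_rel s t u i m g h -> t g = t h.
Proof.
case=> Hs [x /comm_sub_st[H1 H2]].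
have E : s g = t (i h) by rewrite t_inv.
by rewrite (s_comp E) s_inv in H1; rewrite (t_comp E) in H2; congruence.
Qed.

Lemma ab_rel_inv g h : ab_rel s t u i m g h -> ab_rel s t u i m (i g) (i h).
Proof.
move=> Hgh; have Ht := ab_rel_t Hgh; case: Hgh => Hs [x Hc].
have [_ tc] := comm_sub_st Hc.
have E : s g = t (i h) by rewrite t_inv.
rewrite (t_comp E) in tc; subst x.
split; first by rewrite !s_inv.
exists (s g); rewrite inv_inv.
suff <- : gconj g (i (m g (i h))) = m (i g) h by apply/comm_sub_gconj/comm_inv.
have E1 : s (i g) = t (m h (i g)) by composable.
have E2 : s (m h (i g)) = t g by composable.
have E3 : s h = t (i g) by composable.
have E4 : s (i g) = t g by composable.
rewrite /gconj (inv_comp E) inv_inv (comp_assoc E1 E2) (comp_assoc E3 E4).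
by rewrite comp_invl Hs comp_unitr.
Qed.

Lemma ab_rel_comp g g' h h' : ab_rel s t u i m g g' -> ab_rel s t u i m h h' ->
  s g = t h -> s g' = t h' -> ab_rel s t u i m (m g h) (m g' h').
Proof.
move=> Hg Hh Egh Egh'.
case: Hg => Hsg [x Hcg]; case: Hh => Hsh [y Hch].
split; first by rewrite (s_comp Egh) (s_comp Egh').
have [_ tg] := comm_sub_st Hcg; have [_ th] := comm_sub_st Hch.
have E : s g = t (i g') by rewrite t_inv.
have E' : s h = t (i h') by rewrite t_inv.
rewrite (t_comp E) in tg; rewrite (t_comp E') in th; subst x y.
exists (t g).
have Hconj : comm_sub s t u i m (t g) (gconj (i g) (m h (i h'))).
  by rewrite -s_inv; apply: comm_sub_gconj; rewrite t_inv Egh.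
suff <- : m (gconj (i g) (m h (i h'))) (m g (i g')) = m (m g h) (i (m g' h')).
  exact: comm_mul Hconj Hcg.
have E1 : s (m g (m h (i h'))) = t (i g) by composable.
have E2 : s (i g) = t (m g (i g')) by composable.
have E3 : s (i g) = t g by composable.
have E4 : s (m g h) = t (i h') by composable.
have E5 : s (i h') = t (i g') by composable.
rewrite /gconj inv_inv (inv_comp Egh') (comp_assoc E1 E2) -(comp_assoc E3 E) comp_invl.
by rewrite E comp_unitl -(comp_assoc Egh E') (comp_assoc E4 E5).
Qed.

Definition groupoid_congruence (R : G -> G -> Prop) : Prop :=
  [/\ forall g h, R g h -> s g = s h,
      forall g h, R g h -> t g = t h,
      forall g h, R g h -> R (i g) (i h) &
      forall g g' h h', R g g' -> R h h' -> s g = t h -> s g' = t h' ->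
        R (m g h) (m g' h')].

Lemma ab_rel_congruence : groupoid_congruence (ab_rel s t u i m).
Proof.
split; [by move=> g h [] | by move=> g h; apply: ab_rel_t | exact: ab_rel_inv |].
exact: ab_rel_comp.
Qed.

End GroupoidAlgebra.

Section QuotientGroupoid.
Variables (G M Q : Type) (s t : G -> M) (u : M -> G) (i : G -> G) (m : G -> G -> G).
Variables (R : G -> G -> Prop) (q : G -> Q).
Hypothesis q_surj : forall y : Q, exists g, q g = y.

Definition qrepr (y : Q) : G := proj1_sig (cid (q_surj y)).

Lemma qreprK y : q (qrepr y) = y.
Proof. exact: proj2_sig (cid (q_surj y)). Qed.

Definition qsrc y := s (qrepr y).
Definition qtgt y := t (qrepr y).
Definition qunit x := q (u x).
Definition qinv y := q (i (qrepr y)).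
Definition qmul y z := q (m (qrepr y) (qrepr z)).

Hypothesis HR : groupoid_congruence s t i m R.
Hypothesis q_eq : forall g h, q g = q h <-> R g h.

Lemma R_qrepr g : R (qrepr (q g)) g.
Proof. by apply/q_eq; rewrite qreprK. Qed.

Lemma qsrcE g : qsrc (q g) = s g.
Proof. by case: HR => Hs _ _ _; apply/Hs/R_qrepr. Qed.

Lemma qtgtE g : qtgt (q g) = t g.
Proof. by case: HR => _ Ht _ _; apply/Ht/R_qrepr. Qed.

Lemma qinvE g : qinv (q g) = q (i g).
Proof. by case: HR => _ _ Hi _; apply/q_eq/Hi/R_qrepr. Qed.

Lemma qmulE g h : s g = t h -> qmul (q g) (q h) = q (m g h).
Proof.
case: HR => _ _ _ Hm E; apply/q_eq/Hm => //; try exact: R_qrepr.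
by rewrite -/(qsrc (q g)) -/(qtgt (q h)) qsrcE qtgtE.
Qed.

Lemma quotient_groupoid :
  is_groupoid s t u i m -> is_groupoid qsrc qtgt qunit qinv qmul.
Proof.
move=> HG; split.
- move=> y z; have [g <-] := q_surj y; have [h <-] := q_surj z.
  rewrite (qsrcE g) (qtgtE h) => E; rewrite (qmulE E) !qsrcE !qtgtE.
  exact: conj (s_comp HG E) (t_comp HG E).
- move=> y1 y2 y3; have [f <-] := q_surj y1; have [g <-] := q_surj y2.
  have [h <-] := q_surj y3; rewrite !qsrcE !qtgtE => Efg Egh.
  have Efgh : s (m f g) = t h by rewrite (s_comp HG Efg).
  have Efgh' : s f = t (m g h) by rewrite (t_comp HG Egh).
  rewrite (qmulE Efg) (qmulE Egh) (qmulE Efgh) (qmulE Efgh').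
  by rewrite (comp_assoc HG Efg Egh).
- by move=> x; rewrite /qunit qsrcE qtgtE (s_unit HG) (t_unit HG).
- move=> y; have [g <-] := q_surj y; rewrite /qunit qsrcE qtgtE.
  rewrite qmulE ?(s_unit HG) // qmulE ?(t_unit HG) //.
  by rewrite (comp_unitl HG) (comp_unitr HG).
- move=> y; have [g <-] := q_surj y; rewrite /qunit qinvE !qsrcE !qtgtE.
  rewrite (s_inv HG) (t_inv HG) qmulE ?(t_inv HG) // qmulE ?(s_inv HG) //.
  by rewrite (comp_invr HG) (comp_invl HG).
Qed.
End QuotientGroupoid.

Section QuotientDiffeologicalGroupoid.
Variables (G M : diffeological_space) (Q : Type).
Variables (s t : G -> M) (u : M -> G) (i : G -> G) (m : G -> G -> G).
Variables (R : G -> G -> Prop) (q : G -> Q).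
Hypothesis q_surj : forall y : Q, exists g, q g = y.
Hypothesis HR : groupoid_congruence s t i m R.
Hypothesis q_eq : forall g h, q g = q h <-> R g h.

Let GQ := DiffSpace (quotient_diffeology q).
Let sQ : GQ -> M := qsrc s q_surj.
Let tQ : GQ -> M := qtgt t q_surj.
Let uQ : M -> GQ := qunit u q.
Let iQ : GQ -> GQ := qinv i q_surj.
Let mQ : GQ -> GQ -> GQ := qmul m q_surj.
Let sQE : forall g, sQ (q g) = s g := qsrcE q_surj HR q_eq.
Let tQE : forall g, tQ (q g) = t g := qtgtE q_surj HR q_eq.
Let iQE : forall g, iQ (q g) = q (i g) := qinvE q_surj HR q_eq.
Let mQE : forall g h, s g = t h -> mQ (q g) (q h) = q (m g h) := qmulE q_surj HR q_eq.

Lemma quotient_diffeological_groupoid :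
  diffeological_groupoid s t u i m -> diffeological_groupoid sQ tQ uQ iQ mQ.
Proof.
case=> HG [ss st] su si sm; split.
- exact: quotient_groupoid q_surj HR q_eq HG.
- exact: conj (smooth_quotient_lift q_surj ss sQE) (smooth_quotient_lift q_surj st tQE).
- by move=> n U P HP; apply: smooth_quotient_map; apply: su.
- apply: (smooth_quotient_lift q_surj (f := (q : G -> GQ) \o i)) iQE.
  by move=> n U P HP; apply: smooth_quotient_map; apply: si.
- move=> n U P P' HP HP' Hst; split => [|r]; first by case: HP.
  have [V [VU [oV Vr [PG [PG' [HPG HPG' E E']]]]]] :=
    quotient_plot_lift2 q_surj HP HP' r.
  have EPG y : s (PG y) = t (PG' y).
    by rewrite -sQE -tQE -E -E'; apply: Hst.
  exists V, VU; split => //; right; exists (fun y => m (PG y) (PG' y)); split.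
    exact: sm.
  by move=> y /=; rewrite E E' mQE.
Qed.

Lemma quotient_locally_subductive_groupoid :
  locally_subductive_groupoid s t u i m -> locally_subductive_groupoid sQ tQ uQ iQ mQ.
Proof.
case=> HdG [_ Hs] [_ Ht].
have HdGQ := quotient_diffeological_groupoid HdG; case: (HdGQ) => _ [ssQ stQ] _ _ _.
split => //; split => //.
- exact: (locally_subductive_quotient_lift q_surj Hs sQE).
- exact: (locally_subductive_quotient_lift q_surj Ht tQE).
Qed.

End QuotientDiffeologicalGroupoid.

Theorem mainTheorem15 (G M : diffeological_space) (s t : G -> M) (u : M -> G)
  (i : G -> G) (m : G -> G -> G)
  (HG : locally_subductive_groupoid s t u i m)
  (Q : Type) (q : G -> Q)
  (q_surj : forall y : Q, exists g, q g = y)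
  (q_eq : forall g h, q g = q h <-> ab_rel s t u i m g h) :
  exists (HQ : is_diffeology (quotient_plot q))
         (sQ tQ : Q -> M) (uQ : M -> Q) (iQ : Q -> Q) (mQ : Q -> Q -> Q),
    [/\ (forall g, sQ (q g) = s g /\ tQ (q g) = t g),
        (forall x, uQ x = q (u x)),
        (forall g, iQ (q g) = q (i g)),
        (forall g h, s g = t h -> mQ (q g) (q h) = q (m g h)) &
        @locally_subductive_groupoid (DiffSpace HQ) M sQ tQ uQ iQ mQ].
Proof.
have HR : groupoid_congruence s t i m (ab_rel s t u i m).
  by apply: ab_rel_congruence; case: HG => [[]].
exists (quotient_diffeology q), (qsrc s q_surj), (qtgt t q_surj), (qunit u q),
  (qinv i q_surj), (qmul m q_surj); split => //.
- by move=> g; rewrite (qsrcE q_surj HR q_eq) (qtgtE q_surj HR q_eq).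
- exact: qinvE q_surj HR q_eq.
- exact: qmulE q_surj HR q_eq.
- exact: quotient_locally_subductive_groupoid q_surj HR q_eq HG.
Qed.
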